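(* Let $\mathscr B=\{b_k:k\ge1\}$ and $\mathscr B'=\{b'_k:k\ge1\}$ be subsets of $\{2,3,\dots\}$, each consisting of pairwise coprime integers with $\sum_k 1/b_k<\infty$ and $\sum_k1/b'_k<\infty$. Then: (a) $X_{\mathscr B}\subset X_{\mathscr B'}$ if and only if every $b'\in\mathscr B'$ is divisible by some $b\in\mathscr B$; (b) $X_{\mathscr B}=X_{\mathscr B'}$ if and only if $\mathscr B=\mathscr B'$.
   Context: For such a set $\mathscr B$, $X_{\mathscr B}$ denotes the $\mathscr B$-free subshift: the set of $y\in\{0,1\}^{\mathbb Z}$ all of whose finite blocks occur in $\eta$, where $\eta(n)=1$ iff $b\nmid n$ for all $b\in\mathscr B$ (else $0$). Equivalently, $X_{\mathscr B}$ is the set of $y\in\{0,1\}^{\mathbb Z}$ whose support $\mathrm{supp}(y)=\{n:y(n)=1\}$ is $\mathscr B$-admissible, i.e. $|\mathrm{supp}(y)\bmod b|<b$ for every $b\in\mathscr B$. *)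

From HB Require Import structures.
From mathcomp Require Import all_boot all_order all_algebra.
Set Implicit Arguments. Unset Strict Implicit. Unset Printing Implicit Defensive.
Import Order.TTheory GRing.Theory Num.Theory.
Local Open Scope ring_scope.

(* A set B = {b_k : k >= 0} of positive integers is given by its enumeration
   b : nat -> nat. *)

(* Standing hypotheses on B: b_k >= 2, pairwise coprime, sum 1/b_k < oo
   (partial sums of a series of positive terms are bounded). *)
Definition admissible_set (b : nat -> nat) : Prop :=
  [/\ (forall k, (2 <= b k)%N),
      (forall i j, i <> j -> coprime (b i) (b j)) &
      exists M : rat, forall n : nat, \sum_(k < n) ((b k)%:R)^-1 <= M].

Definition eta_one (b : nat -> nat) (n : int) : Prop :=
  forall k, ~ ((b k)%:Z %| n)%Z.

(* X_B: all y in {0,1}^Z (true = 1) all of whose finite blocks occur in eta. *)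
Definition in_X (b : nat -> nat) (y : int -> bool) : Prop :=
  forall (m : int) (L : nat), exists n : int,
    forall i : nat, (i < L)%N -> (y (m + i%:Z) = true <-> eta_one b (n + i%:Z)).

(* Every finite B-admissible block occurs in eta: the Chinese remainder theorem
   fixes the residue of a starting point modulo finitely many b_k (forcing the
   zeros of the block), and since sum 1/b_k < oo a sieve along the arithmetic
   progression of such starting points leaves one that no remaining b_k hits.
   So X_B consists of the sequences all of whose blocks are B-admissible.
   If every b' is a multiple of some b, B-admissible blocks are B'-admissible,
   whence X_B is included in X_B'. If some b' is a multiple of no b, lifting
   each residue mod b' to an integer indivisible by the finitely many small b
   gives a set meeting every class mod b' but at most b' classes of any b > b',
   i.e. a B-admissible set that is not B'-admissible. For (b), mutual
   divisibility of pairwise coprime moduli forces the two sets to coincide. *)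

From mathcomp Require Import all_boot all_order all_algebra zify ring lra.
From Stdlib Require Import Classical.
Set Implicit Arguments. Unset Strict Implicit. Unset Printing Implicit Defensive.
Import Order.TTheory GRing.Theory Num.Theory.
Local Open Scope ring_scope.

Lemma series_tail_small (R : archiRealFieldType) (a : nat -> R) :
  (forall k, 0 <= a k) -> (exists M, forall n, \sum_(k < n) a k <= M) ->
  forall e, 0 < e -> exists m0, forall m n, (m0 <= m)%N -> \sum_(m <= k < n) a k <= e.
Proof.
move=> a_ge0 [M sum_le_M] e e_gt0; apply: NNPP => no_tail.
have block_gt m : exists n, (m <= n)%N /\ e < \sum_(m <= k < n) a k.
  apply: NNPP => no_block; apply: no_tail; exists m => m' n m_le_m'.
  rewrite leNgt; apply/negP => big_sum; apply: no_block; exists n.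
  have m'_le_n : (m' <= n)%N.
    rewrite leqNgt; apply/negP => n_lt_m'; move: big_sum.
    by rewrite big_geq ?(ltnW n_lt_m') // => /(lt_trans e_gt0); rewrite ltxx.
  split; first exact: leq_trans m_le_m' m'_le_n.
  rewrite (big_cat_nat m_le_m' m'_le_n) /=.
  by apply: lt_le_trans big_sum _; rewrite lerDr sumr_ge0.
have sum_grows t : exists n, t%:R * e <= \sum_(0 <= k < n) a k.
  elim: t => [|t [n te_le]]; first by exists 0%N; rewrite mul0r big_geq.
  have [n' [n_le_n' e_lt]] := block_gt n.
  exists n'; rewrite (big_cat_nat (leq0n n) n_le_n') /= -natr1 mulrDl mul1r.
  by rewrite lerD // ltW.
have M_ge0 : 0 <= M by have := sum_le_M 0%N; rewrite big_ord0.
have [n te_le] := sum_grows (Num.Def.archi_bound (M / e)).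
have := archi_boundP (divr_ge0 M_ge0 (ltW e_gt0)); rewrite ltr_pdivrMr // => M_lt.
have := sum_le_M n; rewrite -(big_mkord xpredT) => sum_le.
by have := lt_le_trans M_lt (le_trans te_le sum_le); rewrite ltxx.
Qed.

Lemma admissible_tail (b : nat -> nat) (c : nat) : admissible_set b -> (0 < c)%N ->
  exists m0, (forall m n, (m0 <= m)%N -> \sum_(m <= k < n) ((b k)%:R)^-1 <= (c%:R)^-1 :> rat)
          /\ forall j, (m0 <= j)%N -> (c <= b j)%N.
Proof.
case=> b_ge2 _ bounded c_gt0.
have inv_ge0 k : 0 <= ((b k)%:R)^-1 :> rat by rewrite invr_ge0 ler0n.
have inv_c_gt0 : 0 < (c%:R)^-1 :> rat by rewrite invr_gt0 ltr0n.
have [m0 tail_m0] := series_tail_small inv_ge0 bounded inv_c_gt0.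
exists m0; split => // j m0_le_j; have := tail_m0 j j.+1 m0_le_j.
rewrite big_nat1 lef_pV2 ?posrE ?ltr0n ?ler_nat //; exact: leq_trans (b_ge2 j).
Qed.

Local Open Scope nat_scope.

Lemma coprime_prodl (I : Type) (r : seq I) (P : pred I) (m : I -> nat) c :
  (forall i, P i -> coprime (m i) c) -> coprime (\prod_(i <- r | P i) m i) c.
Proof.
move=> m_coprime; elim/big_rec: _ => [|i x Pi cx]; first exact: coprime1n.
by rewrite coprimeMl m_coprime.
Qed.

Lemma chinese_remainder_family (m rho : nat -> nat) F :
  (forall i j, i <> j -> coprime (m i) (m j)) ->
  exists x, forall j, j < F -> x = rho j %[mod m j].
Proof.
move=> m_coprime; elim: F => [|F [x x_mod]]; first by exists 0.
pose P := \prod_(k < F) m k.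
have coP : coprime P (m F).
  apply: coprime_prodl => k _; apply: m_coprime => eq_kF.
  by move: (ltn_ord k); rewrite eq_kF ltnn.
exists (chinese P (m F) x (rho F)) => j; rewrite ltnS leq_eqVlt => /orP[/eqP->|ltjF].
  by rewrite chinese_modr.
have mj_dvd_P : m j %| P by rewrite /P (bigD1 (Ordinal ltjF)) ?dvdn_mulr.
by rewrite -(modn_dvdm _ mj_dvd_P) chinese_modl // modn_dvdm // x_mod.
Qed.

Definition progression_hits (d a P T : nat) : nat := \sum_(t < T) (d %| a + P * t).

(* Multiples of [d] in a progression of step coprime to [d] have indices [d]
   apart, hence there is at most one per block of [d] consecutive indices. *)
Lemma progression_hits_le (d a P T : nat) : 0 < d -> coprime d P ->
  progression_hits d a P T <= T %/ d + 1.
Proof.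
move=> d_gt0 coP; rewrite /progression_hits -big_mkcond /= sum1_card.
pose A := [pred t : 'I_T | d %| a + P * t].
have same_block (t1 t2 : 'I_T) : t1 \in A -> t2 \in A -> t1 <= t2 ->
    t1 %/ d = t2 %/ d -> t1 = t2.
  move=> At1 At2 le12 eq12; apply: val_inj; apply/eqP; rewrite eqn_leq le12 /=.
  have d_dvd : d %| t2 - t1.
    rewrite -(Gauss_dvdr _ coP) mulnBr.
    have -> : P * t2 - P * t1 = (a + P * t2) - (a + P * t1) by lia.
    exact: dvdn_sub.
  have gap_lt : t2 - t1 < d.
    rewrite (divn_eq t1 d) (divn_eq t2 d) eq12 subnDl.
    exact: leq_ltn_trans (leq_subr _ _) (ltn_pmod _ d_gt0).
  rewrite leqNgt; apply/negP => lt12.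
  by move: gap_lt; rewrite ltnNge dvdn_leq // subn_gt0.
have block_inj : {in A &, injective (fun t : 'I_T => inord (t %/ d) : 'I_(T %/ d).+1)}.
  have div_lt (t : 'I_T) : t %/ d < (T %/ d).+1 by rewrite ltnS leq_div2r // ltnW.
  move=> t1 t2 At1 At2 /(congr1 val) /=; rewrite !inordK ?div_lt // => eq12.
  case: (leqP t1 t2) => [le12|/ltnW le21]; first exact: same_block.
  by apply/esym/same_block => //; rewrite eq12.
rewrite -(card_in_imset block_inj) addn1.
by apply: leq_trans (max_card _) _; rewrite card_ord.
Qed.

Local Open Scope ring_scope.

Lemma progression_hits_le_density (d a P T : nat) : (0 < d)%N -> coprime d P ->
  (progression_hits d a P T)%:R <= T%:R / d%:R + 1 :> rat.
Proof.
move=> d_gt0 coP; have := progression_hits_le a T d_gt0 coP.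
rewrite -(ler_nat rat) => /le_trans; apply.
by rewrite natrD lerD2r ler_pdivlMr ?ltr0n // -natrM ler_nat leq_divM.
Qed.

(* Once [d] exceeds the largest entry [X] there are no hits at all; otherwise
   the +1 of the density bound is absorbed into [X / d]. *)
Lemma progression_hits_le_bounded (d a P T X : nat) : (0 < d)%N -> coprime d P ->
  (0 < a)%N -> (a + P * T <= X)%N ->
  (progression_hits d a P T)%:R <= (T + X)%:R / d%:R :> rat.
Proof.
move=> d_gt0 coP a_gt0 aPT_le_X; have [d_le_X|X_lt_d] := leqP d X.
  apply: le_trans (progression_hits_le_density a T d_gt0 coP) _.
  by rewrite natrD mulrDl lerD2l ler_pdivlMr ?ltr0n // mul1r ler_nat.
rewrite /progression_hits big1 ?mulr_ge0 ?invr_ge0 ?ler0n // => t _.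
apply/eqP; rewrite eqb0; apply: contraTN X_lt_d => d_dvd; rewrite -leqNgt.
apply: leq_trans (dvdn_leq _ d_dvd) _; first by rewrite addn_gt0 a_gt0.
by apply: leq_trans aPT_le_X; rewrite leq_add2l leq_mul2l ltnW ?orbT.
Qed.

Lemma sieve_budget (R : realFieldType) (l k p u v T : R) :
  0 <= l -> 0 <= k -> 1 <= p -> 0 <= u -> 0 <= v ->
  u <= (4 * l + 4)^-1 -> v <= ((4 * l + 4) * p)^-1 -> T = 4 * l * k + l + 3 ->
  l * (T * u + k + (T + (2 * p + p * T + l)) * v) < T.
Proof.
move=> l_ge0 k_ge0 p_ge1 u_ge0 v_ge0 u_le v_le T_def.
have l4_gt0 : 0 < 4 * l + 4 by lra.
have u_small : u * (4 * l + 4) <= 1 by rewrite -ler_pdivlMr // div1r.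
have v_small : v * ((4 * l + 4) * p) <= 1.
  by rewrite -ler_pdivlMr ?div1r // mulr_gt0 //; lra.
have T_ge0 : 0 <= T by rewrite T_def; nra.
have lu : l * u <= 1/4 by nra.
have lvp : l * v * p <= 1/4 by nra.
have lv : l * v <= 1/4 by nra.
have small_u : l * (T * u) <= T / 4 by nra.
have small_v : l * ((T + (2 * p + p * T + l)) * v) <= (T + 2 + T + l) / 4.
  have -> : l * ((T + (2 * p + p * T + l)) * v) = (T + l) * (l * v) + (2 + T) * (l * v * p)
    by ring.
  nra.
rewrite T_def in small_u small_v *; nra.
Qed.

Section BlockOccurrence.

Variable b : nat -> nat.
Hypothesis b_adm : admissible_set b.

Let b_gt0 j : (0 < b j)%N.
Proof. by case: b_adm => b_ge2 _ _; apply: leq_trans (b_ge2 j). Qed.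

Let b_coprime i j : i <> j -> coprime (b i) (b j).
Proof. by case: b_adm => _ + _; apply. Qed.

(* A zero of the pattern at position [i] is forced by [b (K1 + i)] through the
   residue [-i]; as [b (K1 + i) > L], this residue hits no other position of the
   window. All other moduli below [K1 + L] use the residues [r], which avoid
   the ones. *)
Lemma base_point_pattern (s : nat -> bool) (L K1 : nat) (r : nat -> nat) :
  (forall j, K1 <= j -> L < b j)%N ->
  (forall k i, i < L -> s i -> ~~ (b k %| r k + i))%N ->
  exists n0 P, [/\ (0 < n0 < 2 * P)%N, (forall j, K1 + L <= j -> coprime (b j) P)%N &
    forall t i, (i < L)%N ->
      (s i -> forall j, j < K1 + L -> ~~ (b j %| n0 + i + P * t))%N /\
      (~~ s i -> b (K1 + i) %| n0 + i + P * t)%N].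
Proof.
move=> big_K1 r_avoid; pose F0 := (K1 + L)%N.
pose rho j := if ((K1 <= j) && ~~ s (j - K1))%N then (b j - (j - K1))%N else r j.
have rho_avoid j i : (j < F0 -> i < L -> s i -> ~~ (b j %| rho j + i))%N.
  move=> lt_jF0 lt_iL s_i; rewrite /rho.
  case: ifP => [/andP[K1_le_j ns]|_]; last exact: r_avoid.
  have L_lt_bj := big_K1 j K1_le_j; apply/negP => dvd_j.
  case: (ltngtP i (j - K1)) => [lt_i|gt_i|eq_i].
  - by have := dvdn_leq (_ : 0 < b j - (j - K1) + i)%N dvd_j; lia.
  - move: dvd_j; rewrite (_ : b j - (j - K1) + i = b j + (i - (j - K1)))%N; last by lia.
    by rewrite dvdn_addr // => /(dvdn_leq (_ : 0 < i - (j - K1))%N); lia.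
  - by move: ns; rewrite -eq_i s_i.
have rho_hit i : (i < L -> ~~ s i -> b (K1 + i) %| rho (K1 + i) + i)%N.
  move=> lt_iL ns; rewrite /rho leq_addr addKn ns subnK ?dvdnn //.
  by have := big_K1 (K1 + i)%N (leq_addr _ _); lia.
have [x x_mod] := chinese_remainder_family rho F0 b_coprime.
pose P := (\prod_(j < F0) b j)%N; pose n0 := (x %% P + P)%N.
have P_gt0 : (0 < P)%N by apply: prodn_gt0 => j; apply: b_gt0.
have n0_mod t j : (j < F0)%N -> (n0 + P * t = rho j %[mod b j])%N.
  move=> lt_jF0; have bj_dvd_P : (b j %| P)%N.
    by rewrite /P (bigD1 (Ordinal lt_jF0)) ?dvdn_mulr.
  rewrite -modnDmr (eqP (dvdn_mulr t bj_dvd_P)) addn0 /n0 -modnDmr (eqP bj_dvd_P) addn0.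
  by rewrite modn_dvdm // x_mod.
have dvd_shift t i j : (j < F0)%N -> (b j %| n0 + i + P * t)%N = (b j %| rho j + i)%N.
  by move=> /(n0_mod t) eq_mod; rewrite addnAC /dvdn -modnDml eq_mod modnDml.
exists n0, P; split.
- by rewrite /n0 addn_gt0 P_gt0 orbT /= mul2n -addnn ltn_add2r ltn_pmod.
- move=> j F0_le_j; rewrite coprime_sym; apply: coprime_prodl => k _.
  by apply: b_coprime => eq_kj; move: (ltn_ord k); rewrite eq_kj ltnNge F0_le_j.
- move=> t i lt_iL; split=> [s_i j lt_jF0|ns]; first by rewrite dvd_shift // rho_avoid.
  by rewrite dvd_shift ?rho_hit ?ltn_add2l.
Qed.

(* Below the cutoff [K2] each modulus costs at most one extra hit, from [K2]
   on the hits are paid for by the small tail of the series. *)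
Lemma sum_progression_hits_le (L n0 P T X F0 K2 J : nat) : (0 < n0)%N ->
  (forall i, i < L -> n0 + i + P * T <= X)%N -> (F0 <= K2 <= J)%N ->
  (forall j, F0 <= j -> coprime (b j) P)%N ->
  (\sum_(i < L) \sum_(F0 <= j < J) progression_hits (b j) (n0 + i) P T)%:R
    <= L%:R * (T%:R * \sum_(F0 <= j < K2) ((b j)%:R)^-1 + K2%:R
               + (T + X)%:R * \sum_(K2 <= j < J) ((b j)%:R)^-1) :> rat.
Proof.
move=> n0_gt0 entry_le_X /andP[F0_le_K2 K2_le_J] coP.
rewrite natr_sum [leRHS]mulr_natl -[in leRHS](card_ord L) -sumr_const.
apply: ler_sum => i _.
have a_gt0 : (0 < n0 + i)%N by rewrite addn_gt0 n0_gt0.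
rewrite natr_sum (big_cat_nat F0_le_K2 K2_le_J) /= lerD //.
  apply: le_trans (_ : \sum_(F0 <= j < K2) (T%:R / (b j)%:R + 1) <= _).
    rewrite big_nat_cond [leRHS]big_nat_cond; apply: ler_sum => j /andP[/andP[F0_le_j _] _].
    exact: progression_hits_le_density (b_gt0 j) (coP j F0_le_j).
  rewrite big_split /= -mulr_sumr sumr_const_nat lerD2l -mulr_natl mulr1 ler_nat.
  exact: leq_subr.
rewrite mulr_sumr big_nat_cond [leRHS]big_nat_cond.
apply: ler_sum => j /andP[/andP[K2_le_j _] _].
have coP_j := coP j (leq_trans F0_le_K2 K2_le_j).
exact: progression_hits_le_bounded (b_gt0 j) coP_j a_gt0 (entry_le_X i (ltn_ord i)).
Qed.

Lemma progression_hits_cover (L F0 J P n0 T X : nat) : (0 < n0)%N ->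
  (forall i, i < L -> n0 + i + P * T <= X)%N -> (forall j, J <= j -> X < b j)%N ->
  (forall t, t < T -> exists i j, [/\ i < L, F0 <= j & b j %| n0 + i + P * t])%N ->
  (T <= \sum_(i < L) \sum_(F0 <= j < J) progression_hits (b j) (n0 + i) P T)%N.
Proof.
move=> n0_gt0 entry_le_X big_J bad.
have hit_some t : (t < T)%N ->
    (0 < \sum_(i < L) \sum_(F0 <= j < J) (b j %| n0 + i + P * t))%N.
  move=> lt_tT; have [i [j [lt_iL F0_le_j dvd_j]]] := bad t lt_tT.
  have lt_jJ : (j < J)%N.
    rewrite ltnNge; apply/negP => /big_J; rewrite ltnNge => /negP; apply.
    apply: leq_trans (dvdn_leq _ dvd_j) _; first by rewrite !addn_gt0 n0_gt0.
    by apply: leq_trans (entry_le_X i lt_iL); rewrite leq_add2l leq_mul2l ltnW ?orbT.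
  rewrite (bigD1 (Ordinal lt_iL)) //= (bigD1_seq j) ?mem_index_iota ?F0_le_j ?iota_uniq //=.
  by rewrite dvd_j.
rewrite /progression_hits; under eq_bigr do rewrite exchange_big /=; rewrite exchange_big /=.
apply: leq_trans (_ : \sum_(t < T) 1 <= _)%N; first by rewrite sum1_card card_ord.
by apply: leq_sum => t _; apply: hit_some.
Qed.

(* Choose [T] so large that [L * K2] extra hits are negligible, and [J] beyond
   every entry; the hits then number less than [T], so some index is free. *)
Lemma sieve_progression (L F0 P n0 : nat) : (0 < n0 < 2 * P)%N ->
  (forall j, F0 <= j -> coprime (b j) P)%N ->
  (forall m N, (F0 <= m)%N -> \sum_(m <= k < N) ((b k)%:R)^-1 <= ((4 * L + 4)%:R)^-1 :> rat) ->
  exists t, forall i j, (i < L)%N -> (F0 <= j)%N -> ~~ (b j %| n0 + i + P * t)%N.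
Proof.
move=> /andP[n0_gt0 n0_lt] coP tail_F0.
have P_gt0 : (0 < P)%N by lia.
have LP_gt0 : (0 < (4 * L + 4) * P)%N by rewrite muln_gt0 P_gt0 addn_gt0 orbT.
have [K2' [tail_K2 _]] := admissible_tail b_adm LP_gt0.
pose K2 := maxn K2' F0; pose T := (4 * L * K2 + L + 3)%N.
have T_eq : T%:R = 4 * L%:R * K2%:R + L%:R + 3 :> rat by rewrite /T !natrD !natrM.
clearbody T; pose X := (2 * P + P * T + L)%N.
have X_eq : X%:R = 2 * P%:R + P%:R * T%:R + L%:R :> rat by rewrite /X natrD natrD !natrM.
have entry_le_X i : (i < L -> n0 + i + P * T <= X)%N by rewrite /X; lia.
have [J' [_ big_J']] := admissible_tail b_adm (ltn0Sn X).
pose J := maxn J' K2.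
have big_J j : (J <= j -> X < b j)%N by move=> /(leq_trans (leq_maxl _ _)) /big_J'.
have F0_K2_J : (F0 <= K2 <= J)%N by rewrite !leq_maxr.
apply: NNPP => no_good.
have covered : (T <= \sum_(i < L) \sum_(F0 <= j < J) progression_hits (b j) (n0 + i) P T)%N.
  apply: progression_hits_cover n0_gt0 entry_le_X big_J _ => t _.
  apply: NNPP => none; apply: no_good; exists t => i j lt_iL F0_le_j.
  by apply/negP => dvd_j; apply: none; exists i, j.
set u := \sum_(F0 <= j < K2) ((b j)%:R)^-1 : rat.
set v := \sum_(K2 <= j < J) ((b j)%:R)^-1 : rat.
have u_le : u <= (4 * L%:R + 4)^-1 by have := tail_F0 F0 K2 (leqnn _); rewrite natrD natrM.
have v_le : v <= ((4 * L%:R + 4) * P%:R)^-1.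
  by have := tail_K2 K2 J (leq_maxl _ _); rewrite natrM natrD natrM.
have u_ge0 : 0 <= u by apply: sumr_ge0 => j _; rewrite invr_ge0 ler0n.
have v_ge0 : 0 <= v by apply: sumr_ge0 => j _; rewrite invr_ge0 ler0n.
have P_ge1 : 1 <= P%:R :> rat by rewrite ler1n.
have budget := @sieve_budget _ _ _ _ u v T%:R (ler0n _ L) (ler0n _ K2) P_ge1 u_ge0 v_ge0
  u_le v_le T_eq.
have hits_le := sum_progression_hits_le n0_gt0 entry_le_X F0_K2_J coP.
rewrite -(ler_nat rat) in covered.
move: (le_trans covered hits_le); rewrite [(T + X)%:R]natrD X_eq => /le_lt_trans/(_ budget).
by rewrite ltxx.
Qed.

Lemma admissible_block_occurs (s : nat -> bool) (L : nat) (r : nat -> nat) :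
  (forall k i, i < L -> s i -> ~~ (b k %| r k + i))%N ->
  exists n, forall i, (i < L)%N -> (s i <-> forall k, ~~ (b k %| n + i))%N.
Proof.
move=> r_avoid; have LL_gt0 : (0 < 4 * L + 4)%N by rewrite addn_gt0 orbT.
have [K1 [tail_K1 big_K1]] := admissible_tail b_adm LL_gt0.
have L_lt_b j : (K1 <= j -> L < b j)%N.
  by move=> /big_K1; apply: leq_trans; lia.
have [n0 [P [n0_range coP pattern]]] := base_point_pattern L_lt_b r_avoid.
have tail_F0 m N : (K1 + L <= m)%N ->
    \sum_(m <= k < N) ((b k)%:R)^-1 <= ((4 * L + 4)%:R)^-1 :> rat.
  by move=> F0_le_m; apply: tail_K1; apply: leq_trans F0_le_m; apply: leq_addr.
have [t good_t] := sieve_progression n0_range coP tail_F0.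
exists (n0 + P * t)%N => i lt_iL; rewrite addnAC; split.
- move=> s_i k; case: (ltnP k (K1 + L)) => [lt_kF0|F0_le_k]; last exact: good_t.
  exact: (pattern t i lt_iL).1.
- move=> none; apply: contraT => ns.
  by have := none (K1 + i)%N; rewrite (pattern t i lt_iL).2.
Qed.

End BlockOccurrence.

Lemma eta_one_nat (b : nat -> nat) (n i : nat) :
  eta_one b (n%:Z + i%:Z) <-> forall k, ~~ (b k %| n + i)%N.
Proof.
rewrite /eta_one -PoszD; split=> none k; last by rewrite dvdzE; apply/negP; apply: none.
by apply/negP => dvd_k; apply: (none k); rewrite dvdzE.
Qed.

Lemma dvdz_modDl (d x y : int) : (d %| (x %% d)%Z + y)%Z = (d %| x + y)%Z.
Proof. by apply/dvdz_mod0P/dvdz_mod0P; rewrite modzDml. Qed.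

Definition block_admissible (b : nat -> nat) (y : int -> bool) (m : int) (L : nat) :=
  forall k, exists a : int,
    forall i, (i < L)%N -> y (m + i%:Z) -> ~ ((b k)%:Z %| m + i%:Z - a)%Z.

Lemma in_X_of_block_admissible (b : nat -> nat) (y : int -> bool) :
  admissible_set b -> (forall m L, block_admissible b y m L) -> in_X b y.
Proof.
move=> b_adm adm m L; have b_gt0 k : (0 < b k)%N.
  by case: b_adm => b_ge2 _ _; apply: leq_trans (b_ge2 k).
have residue k : exists r : nat, [forall i : 'I_L, y (m + i%:Z) ==> ~~ (b k %| r + i)%N].
  have [a a_avoid] := adm m L k; pose r := absz ((m - a) %% (b k)%:Z)%Z.
  exists r; apply/forallP => i; apply/implyP => y_i; apply/negP => dvd_k.
  apply: (a_avoid i (ltn_ord i) y_i).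
  have : ((b k)%:Z %| (r + i)%N%:Z)%Z := dvd_k.
  by rewrite PoszD gez0_abs ?modz_ge0 ?eqz_nat -?lt0n // dvdz_modDl addrAC.
pose r k := xchoose (residue k).
have r_avoid k i : (i < L)%N -> y (m + i%:Z) -> ~~ (b k %| r k + i)%N.
  by move=> lt_iL y_i; have /forallP/(_ (Ordinal lt_iL)) := xchooseP (residue k); rewrite y_i.
have [n n_occ] := admissible_block_occurs b_adm r_avoid.
by exists n%:Z => i lt_iL; rewrite eta_one_nat; apply: n_occ.
Qed.

Lemma block_admissible_of_in_X (b b' : nat -> nat) (y : int -> bool) (m : int) (L : nat) :
  (forall k, exists j, (b j %| b' k)%N) -> in_X b y -> block_admissible b' y m L.
Proof.
move=> dvd_b' y_in k; have [n n_occ] := y_in m L; have [j dvd_j] := dvd_b' k.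
exists (m - n) => i lt_iL y_i dvd_k; apply: ((n_occ i lt_iL).1 y_i j).
have -> : n + i%:Z = m + i%:Z - (m - n) by ring.
by apply: dvdz_trans dvd_k; rewrite dvdzE.
Qed.

Lemma in_X_subset_of_dvd (b b' : nat -> nat) : admissible_set b' ->
  (forall k, exists j, (b j %| b' k)%N) -> forall y, in_X b y -> in_X b' y.
Proof.
move=> b'_adm dvd_b' y y_in; apply: in_X_of_block_admissible b'_adm _ => m L.
exact: block_admissible_of_in_X.
Qed.

Local Open Scope nat_scope.

(* Adding to [i] the multiple of [c] by the moduli that do not divide [i] makes
   it indivisible by every [m j], [j < K], as long as no [m j] divides [c]. *)
Definition lift_residue (m : nat -> nat) (K c i : nat) : nat :=
  i + c * \prod_(k < K | ~~ (m k %| i)) m k.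

Lemma lift_residue_mod (m : nat -> nat) K c i : lift_residue m K c i = i %[mod c].
Proof. by rewrite /lift_residue addnC mulnC modnMDl. Qed.

Lemma lift_residue_ndvd (m : nat -> nat) K c i j :
  (forall j j', j <> j' -> coprime (m j) (m j')) -> ~~ (m j %| c) -> j < K ->
  ~~ (m j %| lift_residue m K c i).
Proof.
move=> m_coprime ndvd_c lt_jK; rewrite /lift_residue.
have [dvd_i|ndvd_i] := boolP (m j %| i).
  rewrite dvdn_addr // Gauss_dvdl // coprime_sym.
  apply: coprime_prodl => k ndvd_k; rewrite coprime_sym; apply: m_coprime => eq_jk.
  by move: ndvd_k; rewrite -eq_jk dvd_i.
rewrite dvdn_addl // dvdn_mull // (bigD1 (Ordinal lt_jK)) //= dvdn_mulr //.
Qed.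

Lemma exists_missed_residue (d c : nat) (x : nat -> nat) : c < d ->
  exists a, forall i, i < c -> x i %% d != a %% d.
Proof.
move=> lt_cd; have d_gt0 : 0 < d by apply: leq_ltn_trans lt_cd.
pose f (i : 'I_c) : 'I_d := Ordinal (ltn_pmod (x i) d_gt0).
have [a a_missed] : exists a : 'I_d, a \notin codom f.
  apply/existsP; rewrite -negb_forall; apply/negP => /forallP all_hit.
  have : #|'I_d| <= #|'I_c|.
    apply: leq_trans (leq_image_card f 'I_c).
    by apply: subset_leq_card; apply/subsetP => a _; apply: all_hit.
  by rewrite !card_ord leqNgt lt_cd.
exists a => i lt_ic; rewrite (modn_small (ltn_ord a)); apply: contra a_missed => /eqP eq_a.
by apply/codomP; exists (Ordinal lt_ic); apply: val_inj.
Qed.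

Local Open Scope ring_scope.

(* A window of [eta] misses the residue class of [- n] modulo [b k], while the
   window [0, max x] of [y] meets every class. *)
Lemma in_X_misses_residue (b : nat -> nat) (y : int -> bool) (k : nat) (x : nat -> nat) :
  (0 < b k)%N -> in_X b y -> (forall i, (i < b k)%N -> y (x i)%:Z) ->
  ~ (forall i, (i < b k)%N -> x i = i %[mod b k])%N.
Proof.
move=> bk_gt0 y_in y_x x_mod; pose c := b k.
have [n n_occ] := y_in 0 (\max_(i < c) x i).+1.
pose i0 := absz ((- n) %% c%:Z)%Z.
have i0E : i0%:Z = ((- n) %% c%:Z)%Z by rewrite gez0_abs ?modz_ge0 ?eqz_nat -?lt0n.
have lt_i0c : (i0 < c)%N by rewrite -ltz_nat i0E ltz_pmod.
have lt_x_L : (x i0 < (\max_(i < c) x i).+1)%N by rewrite ltnS (leq_bigmax (Ordinal lt_i0c)).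
have := (n_occ _ lt_x_L).1; rewrite add0r => /(_ (y_x i0 lt_i0c) k); apply.
rewrite (divn_eq (x i0) c) x_mod // (modn_small lt_i0c) PoszD PoszM i0E.
by apply/dvdz_mod0P; rewrite addrCA modzMDl modzDmr subrr mod0z.
Qed.

Lemma dvd_of_in_X_subset (b b' : nat -> nat) : admissible_set b -> admissible_set b' ->
  (forall y, in_X b y -> in_X b' y) -> forall k, exists j, (b j %| b' k)%N.
Proof.
move=> b_adm b'_adm sub k; apply: NNPP => no_dvd.
have ndvd j : ~~ (b j %| b' k)%N by apply/negP => dvd_j; apply: no_dvd; exists j.
have [_ b_coprime _] := b_adm; have [b'_ge2 _ _] := b'_adm.
have [K [_ big_K]] := admissible_tail b_adm (ltn0Sn (b' k)).
pose x := lift_residue b K (b' k); pose y z := [exists i : 'I_(b' k), z == (x i)%:Z].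
have y_x i : (i < b' k)%N -> y (x i)%:Z by move=> lt_ic; apply/existsP; exists (Ordinal lt_ic).
have y_in : in_X b y.
  apply: in_X_of_block_admissible b_adm _ => m L j.
  have [a a_missed] : exists a, forall i, (i < b' k)%N -> (x i %% b j != a %% b j)%N.
    have [lt_jK|K_le_j] := ltnP j K; last exact: exists_missed_residue (big_K j K_le_j).
    by exists 0%N => i _; rewrite mod0n; apply: lift_residue_ndvd.
  exists a%:Z => i _ /existsP[i' /eqP ->].
  by rewrite -eqz_mod_dvd !modz_nat eqz_nat; apply/negP; apply: a_missed.
apply: (in_X_misses_residue _ (sub y y_in) y_x); first exact: leq_trans (b'_ge2 k).
by move=> i _; apply: lift_residue_mod.
Qed.

Lemma in_X_subset_iff_dvd (b b' : nat -> nat) : admissible_set b -> admissible_set b' ->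
  (forall y, in_X b y -> in_X b' y) <-> (forall k, exists j, (b j %| b' k)%N).
Proof.
move=> b_adm b'_adm; split; first exact: dvd_of_in_X_subset.
exact: in_X_subset_of_dvd.
Qed.

(* b_j' | b'_l | b_j forces j' = j by coprimality, and then b'_l = b_j. *)
Lemma range_sub_of_dvd (b b' : nat -> nat) : admissible_set b ->
  (forall k, exists j, (b j %| b' k)%N) -> (forall j, exists k, (b' k %| b j)%N) ->
  forall x, (exists j, b j = x) -> exists k, b' k = x.
Proof.
case=> b_ge2 b_coprime _ dvd_b' dvd_b x [j <-].
have [l dvd_l] := dvd_b j; have [j' dvd_j'] := dvd_b' l.
have dvd_jj' : (b j' %| b j)%N := dvdn_trans dvd_j' dvd_l.
have eq_j' : j' = j.
  apply/eqP; apply: contraTT (b_ge2 j') => /eqP/b_coprime.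
  by rewrite /coprime (gcdn_idPl dvd_jj') => /eqP ->.
by exists l; apply/eqP; rewrite eqn_dvd dvd_l -eq_j'.
Qed.

Lemma in_X_eq_range (b b' : nat -> nat) :
  (forall x, (exists k, b k = x) <-> (exists k, b' k = x)) ->
  forall y, in_X b y <-> in_X b' y.
Proof.
move=> same_range.
have eta_eq z : eta_one b z <-> eta_one b' z.
  split=> none k dvd_k.
    have [j eq_j] := (same_range (b' k)).2 (ex_intro _ k erefl).
    by apply: (none j); rewrite eq_j.
  have [j eq_j] := (same_range (b k)).1 (ex_intro _ k erefl).
  by apply: (none j); rewrite eq_j.
by move=> y; split=> y_in m L; have [n n_occ] := y_in m L; exists n => i /n_occ;
  rewrite eta_eq.
Qed.

Theorem mainTheorem13 (b b' : nat -> nat) :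
  admissible_set b -> admissible_set b' ->
  ((forall y, in_X b y -> in_X b' y) <-> (forall k, exists j, (b j %| b' k)%N)) /\
  ((forall y, in_X b y <-> in_X b' y) <->
     (forall x : nat, (exists k, b k = x) <-> (exists k, b' k = x))).
Proof.
move=> b_adm b'_adm; split; first exact: in_X_subset_iff_dvd.
split=> [eq_X x|]; last exact: in_X_eq_range.
have dvd_b' := (in_X_subset_iff_dvd b_adm b'_adm).1 (fun y => (eq_X y).1).
have dvd_b := (in_X_subset_iff_dvd b'_adm b_adm).1 (fun y => (eq_X y).2).
by split; apply: range_sub_of_dvd.
Qed.
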